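(* The intersection graph of $n$ horizontal and vertical line segments in the plane admits a $3$-hop spanner of size $O(n\log n)$.
   Context: The intersection graph has the segments as vertices, with an edge iff the two segments intersect. For a graph $G$ and integer $t\ge1$, a $t$-hop spanner is a subgraph $\widehat{G}$ of $G$ on the same vertex set such that for every edge $uv\in E(G)$ there is a $u$–$v$ path in $\widehat{G}$ with at most $t$ edges; its size is its number of edges. *)

From HB Require Import structures.
From mathcomp Require Import all_boot all_order all_algebra.
Set Implicit Arguments. Unset Strict Implicit. Unset Printing Implicit Defensive.
Import Order.TTheory GRing.Theory Num.Theory.

Local Open Scope ring_scope.

Definition segment (R : realFieldType) : Type := ((R * R) * (R * R))%type.

Definition hv_segment (R : realFieldType) (s : segment R) : Prop :=
  (s.1.1 = s.2.1) \/ (s.1.2 = s.2.2).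

Definition on_seg (R : realFieldType) (s : segment R) (z : R * R) : Prop :=
  exists t : R, 0 <= t /\ t <= 1 /\
    z = ((1 - t) * s.1.1 + t * s.2.1, (1 - t) * s.1.2 + t * s.2.2).

Definition seg_intersect (R : realFieldType) (s s' : segment R) : Prop :=
  exists z, on_seg s z /\ on_seg s' z.

Definition ig_edge (R : realFieldType) (n : nat) (s : 'I_n -> segment R)
  (u v : 'I_n) : Prop := u <> v /\ seg_intersect (s u) (s v).

Definition hop_path (T : finType) (H : rel T) (t : nat) (u v : T) : Prop :=
  exists p : seq T, path H u p /\ last u p = v /\ (size p <= t)%N.

Definition hop_spanner (T : finType) (G : T -> T -> Prop) (H : rel T)
  (t : nat) : Prop :=
  (forall u v, H u v = H v u) /\
  (forall u v, H u v -> G u v) /\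
  (forall u v, G u v -> hop_path H t u v).

Definition n_edges (n : nat) (H : rel 'I_n) : nat :=
  #|[set p : 'I_n * 'I_n | H p.1 p.2 && (p.1 < p.2)%N]|.

(* Every edge of the intersection graph is either a crossing of a horizontal
   and a vertical segment or an overlap of two collinear segments, and an
   overlap is a crossing with a degenerate segment: the left (lower) endpoint
   of one segment lying on the other. So it suffices to give, for one crossing
   relation, a 3-hop spanner whose edges can be oriented with out-degree
   O(log n).

   In one dimension this is a stabbing problem between points and intervals.
   Take a minimum set S of intervals covering every stabbed point: a point lies
   in at most two members of S and an interval meets at most three of them,
   since otherwise S could be shrunk. Join each point to its intervals in S, and
   each interval v to one common point t with every B in S that it meets; a
   point p in v is then reached along p - B - t - v.

   For crossings, rank the vertical segments by abscissa and build a segment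
   tree on the ranks: a horizontal segment covers at most two canonical dyadic
   blocks per level and a vertical one lies in one block per level. Inside a
   block the crossings form the stabbing problem between the heights of the
   horizontal segments and the y-ranges of the vertical ones, and summing over
   the O(log n) levels bounds the out-degrees. *)

From mathcomp Require Import all_boot all_order all_algebra.
From mathcomp Require Import zify ring lra.
Set Implicit Arguments. Unset Strict Implicit. Unset Printing Implicit Defensive.
Import Order.TTheory GRing.Theory Num.Theory.

Lemma sum_nat_of_bool (I : finType) (b : pred I) : \sum_i (b i : nat) = #|[set i | b i]|.
Proof. by rewrite -sum1dep_card [RHS]big_mkcond; apply: eq_bigr => i _; case: (b i). Qed.

Lemma card_exists_le (I T : finType) (F : I -> pred T) :
  #|[set x | [exists i, F i x]]| <= \sum_i #|[set x | F i x]|.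
Proof.
rewrite -sum1dep_card (eq_bigr (fun i => \sum_(x | F i x) 1)) => [|i _]; last first.
  by rewrite sum1dep_card.
rewrite (exchange_big_dep predT) //= big_mkcond /=; apply: leq_sum => x _.
case: existsP => // -[i Fix]; rewrite (bigD1 i) //=.
Qed.

Section HopCovers.
Variable T : finType.

Definition sym_rel (E : rel T) : rel T := fun a b => E a b || E b a.

Definition simple_graph (E : rel T) : rel T := fun a b => (a != b) && sym_rel E a b.

Definition walk3 (E : rel T) (u v : T) : Prop :=
  exists a b, [&& sym_rel E u a, sym_rel E a b & sym_rel E b v].

(* Only out-degrees are bounded: a cover interval may be joined to many points. *)
Definition hop3_cover (X : rel T) (k : T -> nat) (E : rel T) : Prop :=
  [/\ forall a b, E a b -> sym_rel X a b,
      forall a, #|[set b | E a b]| <= k a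
    & forall u v, X u v -> walk3 E u v].

Lemma sym_relC (E : rel T) a b : sym_rel E a b = sym_rel E b a.
Proof. exact: orbC. Qed.

Lemma walk3C (E : rel T) u v : walk3 E u v -> walk3 E v u.
Proof.
by case=> a [b /and3P [ua ab bv]]; exists b, a; rewrite sym_relC bv sym_relC ab sym_relC.
Qed.

Lemma sub_walk3 (E E' : rel T) u v : subrel E E' -> walk3 E u v -> walk3 E' u v.
Proof.
move=> EE' [a [b /and3P [ua ab bv]]]; exists a, b.
have sub x y : sym_rel E x y -> sym_rel E' x y.
  by rewrite /sym_rel; case/orP => /EE' ->; rewrite ?orbT.
by rewrite !sub.
Qed.

Lemma loopless_path (S : rel T) u p : path S u p ->
  exists p', [/\ path (fun x y => (x != y) && S x y) u p', last u p' = last u p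
               & size p' <= size p].
Proof.
elim: p u => [|x p IHp] u /=; first by exists [::].
case/andP => Sux /IHp [p' [xp' lastp' szp']]; move: Sux xp' lastp'.
have [<- _ xp' lastp'|ux Sux xp' lastp'] := eqVneq u x.
  by exists p'; split => //; apply: leqW.
by exists (x :: p'); split => //=; rewrite ux Sux.
Qed.

Lemma walk3_hop_path (E : rel T) u v : walk3 E u v -> hop_path (simple_graph E) 3 u v.
Proof.
case=> a [b /and3P [ua ab bv]].
have [|p [pp lastp szp]] := @loopless_path (sym_rel E) u [:: a; b; v].
  by rewrite /= ua ab bv.
by exists p.
Qed.

Lemma hop3_cover_spanner (G : T -> T -> Prop) X k E :
  (forall u v, G u v <-> u != v /\ sym_rel X u v) -> hop3_cover X k E ->
  hop_spanner G (simple_graph E) 3.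
Proof.
move=> GE [EX _ Xwalk]; split=> [u v|]; first by rewrite /simple_graph eq_sym sym_relC.
split=> [u v /andP [uv Euv]|u v /GE [_]].
  by apply/GE; split => //; case/orP: Euv => /EX //; rewrite sym_relC.
by case/orP => /Xwalk; [|move/walk3C] => /walk3_hop_path.
Qed.

Lemma hop3_cover_le X k k' E : (forall a, k a <= k' a) ->
  hop3_cover X k E -> hop3_cover X k' E.
Proof. by move=> kk' [EX Ek Xwalk]; split => // a; apply: leq_trans (Ek a) (kk' a). Qed.

Lemma eq_hop3_cover X X' k E : X =2 X' -> hop3_cover X k E -> hop3_cover X' k E.
Proof.
move=> XX' [EX Ek Xwalk]; split=> // [a b /EX|u v]; first by rewrite /sym_rel !XX'.
by rewrite -XX'; apply: Xwalk.
Qed.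

Lemma hop3_cover_bigcup (I : finType) (X : I -> rel T) (k : I -> T -> nat) (Y : rel T) :
  (forall i, exists E, hop3_cover (X i) (k i) E) ->
  (forall i, subrel (X i) Y) -> (forall u v, Y u v -> exists i, X i u v) ->
  exists E, hop3_cover Y (fun a => \sum_i k i a) E.
Proof.
case/fin_all_exists => E covE XY YX.
exists (fun a b => [exists i, E i a b]); split => [a b /existsP [i Eab]|a|u v].
- have [EX _ _] := covE i; move: (EX a b Eab).
  by rewrite /sym_rel; case/orP => /XY ->; rewrite ?orbT.
- apply: leq_trans (card_exists_le (fun i b => E i a b)) _; apply: leq_sum => i _.
  by have [] := covE i.
case/YX => i Xuv; have [_ _ /(_ u v Xuv)] := covE i.
by apply: sub_walk3 => a b Eab; apply/existsP; exists i.
Qed.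

Lemma hop3_coverU X1 X2 k1 k2 :
  (exists E, hop3_cover X1 k1 E) -> (exists E, hop3_cover X2 k2 E) ->
  exists E, hop3_cover (fun u v => X1 u v || X2 u v) (fun a => k1 a + k2 a) E.
Proof.
move=> cov1 cov2.
have [i|i u v|u v|E covE] := @hop3_cover_bigcup bool (fun i => if i then X1 else X2)
  (fun i => if i then k1 else k2) (fun u v => X1 u v || X2 u v).
- by case: i.
- by case: i => /= ->; rewrite ?orbT.
- by case/orP; [exists true | exists false].
by exists E; apply: hop3_cover_le covE => a; rewrite big_bool.
Qed.

End HopCovers.

Lemma n_edges_le1 n (H : rel 'I_n) : n <= 1 -> n_edges H = 0.
Proof.
move=> n1; apply/eqP; rewrite cards_eq0; apply/eqP/setP => -[i j]; rewrite !inE /=.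
by apply/negbTE/nandP; right; move: (ltn_ord i) (ltn_ord j); lia.
Qed.

Lemma n_edges_hop3_cover n X k (E : rel 'I_n) :
  hop3_cover X k E -> n_edges (simple_graph E) <= 2 * \sum_a k a.
Proof.
case=> _ degE _; rewrite /n_edges -sum1dep_card big_mkcond /= mul2n -addnn.
apply: (@leq_trans (\sum_(p : 'I_n * 'I_n) ((E p.1 p.2 : nat) + E p.2 p.1))).
  apply: leq_sum => -[a b] _ /=; rewrite /simple_graph /sym_rel.
  by case: (E a b); case: (E b a); rewrite ?andbF //=; case: ifP.
have sumE : \sum_a \sum_b (E a b : nat) <= \sum_a k a.
  by apply: leq_sum => a _; rewrite sum_nat_of_bool; exact: degE.
rewrite big_split /= -(pair_bigA _ (fun a b => (E a b : nat))).
rewrite -(pair_bigA _ (fun a b => (E b a : nat))) [X in _ + X]exchange_big /=.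
exact: leq_add.
Qed.

Section Stabbing.
Variables (disp : Order.disp_t) (R : orderType disp) (T : finType).
Variables (isP isI : pred T) (y lo hi : T -> R).

Definition stabs : rel T :=
  fun p v => [&& isP p, isI v, (lo v <= y p)%O & (y p <= hi v)%O].

Definition stab_cover (S : {set T}) : bool :=
  [forall B in S, isI B] && [forall p, forall v, stabs p v ==> [exists B in S, stabs p B]].

Lemma stab_coverP (S : {set T}) : reflect
  ({subset S <= isI} /\ forall p v, stabs p v -> exists2 B, B \in S & stabs p B)
  (stab_cover S).
Proof.
apply: (iffP andP) => [[/forall_inP SI /forallP cov]|[SI cov]]; split => //.
- move=> p v pv; have /forallP/(_ v)/implyP/(_ pv)/exists_inP := cov p; exact.
- exact/forall_inP.
apply/forallP => p; apply/forallP => v; apply/implyP => /cov [B BS pB].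
by apply/exists_inP; exists B.
Qed.

Lemma stab_cover_all : stab_cover [set v | isI v].
Proof.
apply/stab_coverP; split => [v|p v pv]; first by rewrite inE.
by exists v; rewrite // inE; case/and4P: pv.
Qed.

Lemma stab_cover_refine (S S' : {set T}) : stab_cover S -> {subset S' <= isI} ->
  (forall p B, B \in S -> stabs p B -> exists2 B', B' \in S' & stabs p B') ->
  stab_cover S'.
Proof.
move=> /stab_coverP [_ covS] S'I covSS'; apply/stab_coverP; split => // p v.
by case/covS => B /covSS'; apply.
Qed.

Lemma stabs_overlap t I J p : stabs t I -> stabs t J -> isP p ->
  (lo I <= y p)%O -> (y p <= hi J)%O -> stabs p I || stabs p J.
Proof.
case/and4P => _ II _ tI /and4P [_ IJ Jt _] Pp Ip pJ.
rewrite /stabs Pp II IJ Ip pJ /=.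
case: (leP (y p) (y t)) => [pt|/ltW tp]; first by rewrite (le_trans pt tI).
by rewrite (le_trans Jt tp) orbT.
Qed.

Lemma stabs_chain t1 t2 I v J q : stabs t1 I -> stabs t1 v -> stabs t2 v -> stabs t2 J ->
  isP q -> (lo I <= y q)%O -> (y q <= hi J)%O -> [|| stabs q I, stabs q v | stabs q J].
Proof.
move=> t1I t1v t2v t2J Pq Iq qJ; have [qv|/ltW vq] := leP (y q) (hi v).
  by case/orP: (stabs_overlap t1I t1v Pq Iq qv) => ->; rewrite ?orbT.
have lvq : (lo v <= y q)%O.
  by case/and4P: t2v => _ _ lvt tv; exact: le_trans lvt (le_trans tv vq).
by case/orP: (stabs_overlap t2v t2J Pq lvq qJ) => ->; rewrite ?orbT.
Qed.

Lemma leq_card_setD2 (A : {set T}) a b : #|A| <= #|A :\: [set a; b]| + 2.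
Proof.
rewrite -(cardsID [set a; b] A) addnC leq_add2l.
apply: leq_trans (subset_leq_card (subsetIr _ _)) _.
by rewrite cards2; case: (a != b).
Qed.

Lemma extremal_intervals (M : {set T}) k : k + 2 < #|M| ->
  exists Bl Bh, [/\ Bl \in M, Bh \in M,
    forall B, B \in M -> (lo Bl <= lo B)%O /\ (hi B <= hi Bh)%O
  & k < #|M :\: [set Bl; Bh]|].
Proof.
move=> ltkM; have /card_gt0P [B0 B0M] : 0 < #|M| by apply: leq_trans ltkM.
case: (arg_minP lo B0M) => Bl BlM Blmin; case: (arg_maxP hi B0M) => Bh BhM Bhmax.
exists Bl, Bh; split => // [B BM|]; first by split; [apply: Blmin | apply: Bhmax].
by have := leq_card_setD2 M Bl Bh; lia.
Qed.

Definition meets (B v : T) : bool := [exists t, stabs t B && stabs t v].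

Section MinimumCover.
Variable S : {set T}.
Hypotheses (coverS : stab_cover S) (minS : forall S', stab_cover S' -> #|S| <= #|S'|).

Lemma min_cover_point_load p : #|[set B in S | stabs p B]| <= 2 * isP p.
Proof.
case Pp: (isP p); last first.
  by rewrite leqn0 cards_eq0; apply/eqP/setP => B; rewrite !inE /stabs Pp andbF.
rewrite leqNgt; apply/negP => /(@extremal_intervals _ 0) [Bl [Bh []]].
rewrite !inE => /andP [BlS pBl] /andP [BhS pBh] ext /card_gt0P [B].
rewrite !inE => /andP [/norP [BBl BBh] /andP [BS pB]].
suff /minS : stab_cover (S :\ B) by rewrite (cardsD1 B S) BS ltnn.
apply: stab_cover_refine coverS _ _ => [B'|q B' B'S qB'].
  by rewrite inE => /andP [_]; case/stab_coverP: coverS => SI _ /SI.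
have [eB'|B'B] := eqVneq B' B; last by exists B'; rewrite // !inE B'B.
subst B'.
have [lBlB hBBh] : (lo Bl <= lo B)%O /\ (hi B <= hi Bh)%O by apply: ext; rewrite inE BS.
case/and4P: (qB') => Pq _ Bq qB.
have /orP [qBl|qBh] := stabs_overlap pBl pBh Pq (le_trans lBlB Bq) (le_trans qB hBBh).
  by exists Bl; rewrite // !inE eq_sym BBl BlS.
by exists Bh; rewrite // !inE eq_sym BBh BhS.
Qed.

Lemma min_cover_interval_load v : #|[set B in S | meets B v]| <= 3 * isI v.
Proof.
case Iv: (isI v); last first.
  rewrite leqn0 cards_eq0; apply/eqP/setP => B; rewrite !inE.
  by apply/negbTE/nandP; right; apply/existsP => -[t /andP [_ /and4P []]]; rewrite Iv.
rewrite leqNgt; apply/negP => /(@extremal_intervals _ 1) [Bl [Bh []]].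
set M := [set B in S | meets B v].
move=> BlM BhM ext /card_gt1P [B1 [B2 []]]; rewrite !in_setD !in_set2.
move=> /andP [/norP [B1l B1h] B1M] /andP [/norP [B2l B2h] B2M] B12.
have MS B : B \in M -> B \in S by rewrite inE => /andP [].
have [t1 /andP [t1Bl t1v]] : exists t, stabs t Bl && stabs t v.
  by apply/existsP; move: BlM; rewrite inE => /andP [].
have [t2 /andP [t2Bh t2v]] : exists t, stabs t Bh && stabs t v.
  by apply/existsP; move: BhM; rewrite inE => /andP [].
set X := [set B1; B2]; set S' := v |: (S :\: X).
suff /minS : stab_cover S'.
  have XS : X \subset S by apply/subsetP => B; rewrite !inE => /orP [] /eqP ->; apply: MS.
  have := cardsID X S; rewrite (setIidPr XS) cards2 B12 /S' cardsU1 => <-.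
  by rewrite leq_add2r; case: (v \notin _).
apply: stab_cover_refine coverS _ _ => [B|q B BS qB].
  by rewrite !inE => /orP [/eqP -> //|/andP [_]]; case/stab_coverP: coverS => SI _ /SI.
have inS' B' : B' \in S -> B' \notin X -> B' \in S'.
  by move=> B'S B'X; rewrite in_setU1 in_setD B'S B'X orbT.
have [BX|BX] := boolP (B \in X); last by exists B => //; apply: inS'.
have BlS' : Bl \in S' by rewrite inS' ?MS // !inE negb_or ![Bl == _]eq_sym B1l B2l.
have BhS' : Bh \in S' by rewrite inS' ?MS // !inE negb_or ![Bh == _]eq_sym B1h B2h.
have vS' : v \in S' by rewrite !inE eqxx.
have [lBlB hBBh] : (lo Bl <= lo B)%O /\ (hi B <= hi Bh)%O.
  by apply: ext; case/set2P: BX => ->.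
case/and4P: (qB) => Pq _ Bq qB'.
case/or3P: (stabs_chain t1Bl t1v t2v t2Bh Pq (le_trans lBlB Bq) (le_trans qB' hBBh)).
- by exists Bl.
- by exists v.
by exists Bh.
Qed.

End MinimumCover.

Lemma stabs_hop3_cover : exists E, hop3_cover stabs (fun a => 2 * isP a + 3 * isI a) E.
Proof.
have [S coverS minS] := arg_minnP (fun S : {set T} => #|S|) stab_cover_all.
pose witness B v := [pick t | stabs t B && stabs t v].
have witnessP B v t : witness B v = Some t -> stabs t B && stabs t v.
  by rewrite /witness; case: pickP => // t' ? [<-].
pose E a b := ((b \in S) && stabs a b) || [exists B in S, witness B a == Some b].
exists E; split => [a b /orP [/andP [_ ab]|/exists_inP [B _ /eqP /witnessP]]|a|p v pv].
- by rewrite /sym_rel ab.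
- by case/andP => _ ba; rewrite /sym_rel ba orbT.
- pose pick_in B := odflt a (witness B a).
  have sub : [set b | E a b] \subset
      [set B in S | stabs a B] :|: pick_in @: [set B in S | meets B a].
    apply/subsetP => b; rewrite !inE => /orP [->//|/exists_inP [B BS /eqP wB]].
    apply/orP; right; apply/imsetP; exists B; last by rewrite /pick_in wB.
    by rewrite inE BS; apply/existsP; exists b; apply: witnessP.
  apply: leq_trans (subset_leq_card sub) _; apply: leq_trans (leq_card_setU _ _).1 _.
  apply: leq_add; first exact: min_cover_point_load.
  exact: leq_trans (leq_imset_card _ _) (min_cover_interval_load coverS minS _).
case/stab_coverP: coverS => _ /(_ p v pv) [B BS pB].
have [t /andP [tB tv] wB] : exists2 t, stabs t B && stabs t v & witness B v = Some t.
  by rewrite /witness; case: pickP => [t|/(_ p)]; [exists t | rewrite pB pv].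
exists B, t; rewrite /sym_rel /E BS pB tB /= orbT /=.
by apply/orP; right; apply/orP; right; apply/exists_inP; exists B; rewrite ?wB.
Qed.

End Stabbing.

Section DyadicDecomposition.
Variables p q : nat.

(* (j, k) is the block of ranks [k 2^j, (k+1) 2^j); the canonical blocks are the
   maximal blocks contained in [p, q). *)
Definition dyadic_inside j k := (p <= k * 2 ^ j) && (k.+1 * 2 ^ j <= q).

Definition dyadic_canonical j k := dyadic_inside j k && ~~ dyadic_inside j.+1 (k %/ 2).

Lemma dyadic_canonical_exists L r : q <= 2 ^ L -> p <= r < q ->
  exists2 j, j <= L & dyadic_canonical j (r %/ 2 ^ j).
Proof.
move=> qL /andP [pr rq]; pose P j := dyadic_inside j (r %/ 2 ^ j).
have P0 : P 0 by rewrite /P /dyadic_inside expn0 divn1 !muln1 pr rq.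
have PL j : P j -> j <= L.
  case/andP => _ /leq_trans/(_ qL) jL; rewrite -(@leq_exp2l 2) //.
  exact: leq_trans (leq_pmull _ _) jL.
case: (ex_maxnP (ex_intro P 0 P0) PL) => j Pj maxj; exists j; first exact: PL.
apply/andP; split=> //; apply/negP; rewrite -divnMA -expnSr => /maxj.
by rewrite ltnn.
Qed.

Lemma dyadic_canonical_parity j k1 k2 : dyadic_canonical j k1 -> dyadic_canonical j k2 ->
  odd k1 = odd k2 -> k1 = k2.
Proof.
rewrite /dyadic_canonical /dyadic_inside expnS !negb_and -!ltnNge.
have := expn_gt0 2 j; move: (2 ^ j) => X X0.
have := odd_double_half k1; have := odd_double_half k2; rewrite -!divn2.
move: (k1 %/ 2) (k2 %/ 2) => m1 m2.
by case: (odd k1); case: (odd k2) => //= e2 e1; nia.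
Qed.

Lemma card_dyadic_canonical j m : #|[set k : 'I_m | dyadic_canonical j k]| <= 2.
Proof.
rewrite -(cardsID [set k : 'I_m | odd k]); apply: (@leq_add _ _ 1 1).
  apply/card_le1_eqP => k1 k2; rewrite !inE => /andP [c1 o1] /andP [c2 o2].
  by apply: val_inj; apply: (dyadic_canonical_parity c2 c1); rewrite o1 o2.
apply/card_le1_eqP => k1 k2; rewrite !inE => /andP [o1 c1] /andP [o2 c2].
by apply: val_inj; apply: (dyadic_canonical_parity c2 c1); rewrite (negbTE o1) (negbTE o2).
Qed.

End DyadicDecomposition.

Section RankCross.
Variables (disp : Order.disp_t) (R : orderType disp) (T : finType) (L : nat).
Variables (isH isV : pred T) (r p q : T -> nat) (y lo hi : T -> R).
Hypotheses (rV : forall v, isV v -> r v < 2 ^ L) (qH : forall h, isH h -> q h <= 2 ^ L).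

Definition rank_cross : rel T :=
  fun h v => [&& isH h, isV v, p h <= r v < q h & (lo v <= y h <= hi v)%O].

Definition node_h j k h := isH h && dyadic_canonical (p h) (q h) j k.
Definition node_v j k v := isV v && (r v %/ 2 ^ j == k).

Lemma rank_cross_hop3_cover : exists E, hop3_cover rank_cross (fun _ => 7 * L.+1) E.
Proof.
pose X (nd : 'I_L.+1 * 'I_(2 ^ L)) := stabs (node_h nd.1 nd.2) (node_v nd.1 nd.2) y lo hi.
pose k (nd : 'I_L.+1 * 'I_(2 ^ L)) a := 2 * node_h nd.1 nd.2 a + 3 * node_v nd.1 nd.2 a.
have [nd|[j m] h v|h v|E covE] := @hop3_cover_bigcup _ _ X k rank_cross.
- exact: stabs_hop3_cover.
- case/and4P => /andP [Hh /andP [/andP [ph qh] _]] /andP [Vv /eqP rvm] lv vh.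
  have j0 : 0 < 2 ^ j by rewrite expn_gt0.
  rewrite /rank_cross Hh Vv lv vh (leq_trans ph) -?rvm ?leq_divM //=.
  by rewrite andbT (leq_trans (ltn_ceil _ j0)) ?rvm.
- case/and4P => Hh Vv /(dyadic_canonical_exists (qH Hh)) [j jL hj] yhv.
  have rjL : r v %/ 2 ^ j < 2 ^ L by apply: leq_ltn_trans (leq_div _ _) (rV Vv).
  exists (Ordinal (jL : j < L.+1), Ordinal rjL).
  by rewrite /X /stabs /node_h /node_v /= Hh Vv hj eqxx.
exists E; apply: hop3_cover_le covE => a; rewrite /k big_split -!big_distrr /=.
have sumH : \sum_(nd : 'I_L.+1 * 'I_(2 ^ L)) node_h nd.1 nd.2 a <= 2 * L.+1.
  rewrite -(pair_bigA _ (fun (j : 'I_L.+1) (m : 'I_(2 ^ L)) => (node_h j m a : nat))) /=.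
  apply: (@leq_trans (\sum_(j < L.+1) 2)); last by rewrite sum_nat_const card_ord mulnC.
  apply: leq_sum => j _; rewrite sum_nat_of_bool.
  apply: leq_trans (card_dyadic_canonical (p a) (q a) j (2 ^ L)).
  by apply: subset_leq_card; apply/subsetP => m; rewrite !inE => /andP [].
have sumV : \sum_(nd : 'I_L.+1 * 'I_(2 ^ L)) node_v nd.1 nd.2 a <= L.+1.
  rewrite -(pair_bigA _ (fun (j : 'I_L.+1) (m : 'I_(2 ^ L)) => (node_v j m a : nat))) /=.
  apply: (@leq_trans (\sum_(j < L.+1) 1)); last by rewrite sum_nat_const card_ord muln1.
  apply: leq_sum => j _; rewrite sum_nat_of_bool.
  apply/card_le1_eqP => m1 m2; rewrite !inE => /andP [_ /eqP e1] /andP [_ /eqP e2].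
  by apply: val_inj => /=; rewrite -e1 -e2.
apply: leq_trans (leq_add (leq_mul (leqnn 2) sumH) (leq_mul (leqnn 3) sumV)) _; lia.
Qed.

End RankCross.

Section Cross.
Variables (disp : Order.disp_t) (R : orderType disp) (T : finType).
Variables (isH isV : pred T) (x a b y lo hi : T -> R).

Definition cross : rel T :=
  fun h v => [&& isH h, isV v, (a h <= x v <= b h)%O & (lo v <= y h <= hi v)%O].

Definition rank_of v := #|[set w | isV w & (x w < x v)%O]|.
Definition rank_lo h := #|[set w | isV w & (x w < a h)%O]|.
Definition rank_hi h := #|[set w | isV w & (x w <= b h)%O]|.

Lemma leq_rank_lo h v : isV v -> (rank_lo h <= rank_of v) = (a h <= x v)%O.
Proof.
move=> Vv; have [ahv|vah] := leP (a h) (x v).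
  apply: subset_leq_card; apply/subsetP => w; rewrite !inE => /andP [-> /= wah].
  exact: lt_le_trans wah ahv.
apply/negbTE; rewrite -ltnNge; apply: proper_card; apply/properP; split.
  by apply/subsetP => w; rewrite !inE => /andP [-> /= /lt_trans ->].
by exists v; rewrite !inE Vv ?vah ?ltxx.
Qed.

Lemma ltn_rank_hi h v : isV v -> (rank_of v < rank_hi h) = (x v <= b h)%O.
Proof.
move=> Vv; have [vbh|bhv] := leP (x v) (b h).
  apply: proper_card; apply/properP; split.
    by apply/subsetP => w; rewrite !inE => /andP [-> /= /lt_le_trans/(_ vbh)/ltW].
  by exists v; rewrite !inE Vv ?vbh ?ltxx.
apply/negbTE; rewrite -leqNgt; apply: subset_leq_card; apply/subsetP => w.
by rewrite !inE => /andP [-> /= /le_lt_trans ->].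
Qed.

Lemma cross_hop3_cover : exists E, hop3_cover cross (fun _ => 7 * (up_log 2 #|T|).+1) E.
Proof.
have TL : #|T| <= 2 ^ up_log 2 #|T| by apply: up_logP.
have [v Vv|h _|E covE] :=
  @rank_cross_hop3_cover _ R T (up_log 2 #|T|) isH isV rank_of rank_lo rank_hi y lo hi.
- apply: leq_trans TL; rewrite -cardsT; apply: proper_card; rewrite properT.
  by apply/eqP => /setP /(_ v); rewrite !inE ltxx andbF.
- exact: leq_trans (max_card _) TL.
exists E; apply: eq_hop3_cover covE => h v.
rewrite /rank_cross /cross; case Hh: (isH h); case Vv: (isV v) => //=.
by rewrite leq_rank_lo // ltn_rank_hi.
Qed.

End Cross.

Lemma cross_collinear (disp : Order.disp_t) (R : orderType disp) (T : finType)
    (P : pred T) (a b y : T -> R) u w t :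
  P u -> P w -> y u = y w -> (a u <= t <= b u)%O -> (a w <= t <= b w)%O ->
  cross P P a a b y y y u w || cross P P a a b y y y w u.
Proof.
move=> Pu Pw yuw /andP [aut tbu] /andP [awt tbw]; rewrite /cross Pu Pw yuw lexx /=.
case/orP: (le_total (a u) (a w)) => le; rewrite le /=.
  by rewrite (le_trans awt tbu).
by rewrite (le_trans aut tbw) orbT.
Qed.

Section Segments.
Variable R : realFieldType.
Local Open Scope ring_scope.

Lemma convex_combP (u1 u2 w : R) :
  (exists t, [/\ 0 <= t, t <= 1 & w = (1 - t) * u1 + t * u2]) <->
  Num.min u1 u2 <= w <= Num.max u1 u2.
Proof.
wlog le12 : u1 u2 / u1 <= u2.
  move=> wlog; case/orP: (le_total u1 u2) => [/wlog //|le21].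
  rewrite minC maxC -(wlog u2 u1 le21).
  by split=> -[t [t0 t1 ->]]; exists (1 - t); split; rewrite ?subr_ge0 ?lerBlDr ?lerDl //; ring.
rewrite (min_idPl le12) (max_idPr le12); split=> [[t [t0 t1 ->]]|/andP [u1w wu2]].
  by apply/andP; split; nra.
have [e12|ne12] := eqVneq u1 u2.
  exists 0; split; rewrite ?ler01 //; move: wu2; rewrite -e12 => wu1.
  by rewrite (@le_anti _ _ w u1) ?u1w ?wu1 //; ring.
have d12 : 0 < u2 - u1 by rewrite subr_gt0 lt_neqAle ne12.
exists ((w - u1) / (u2 - u1)); split.
- by rewrite divr_ge0 // subr_ge0.
- by rewrite ler_pdivrMr // mul1r lerD2r.
by field; rewrite gt_eqF.
Qed.

Lemma on_vsegP (s : segment R) z : s.1.1 = s.2.1 ->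
  on_seg s z <-> z.1 = s.1.1 /\ Num.min s.1.2 s.2.2 <= z.2 <= Num.max s.1.2 s.2.2.
Proof.
case: s z => [[x1 y1] [x2 y2]] [z1 z2] /= <-; rewrite -convex_combP; split.
  by case=> t [t0 [t1 [-> ->]]]; split; [ring | exists t].
by case=> -> [t [t0 t1 ->]]; exists t; do 2 split => //=; congr pair; ring.
Qed.

Lemma on_hsegP (s : segment R) z : s.1.2 = s.2.2 ->
  on_seg s z <-> z.2 = s.1.2 /\ Num.min s.1.1 s.2.1 <= z.1 <= Num.max s.1.1 s.2.1.
Proof.
case: s z => [[x1 y1] [x2 y2]] [z1 z2] /= <-; rewrite -convex_combP; split.
  by case=> t [t0 [t1 [-> ->]]]; split; [ring | exists t].
by case=> -> [t [t0 t1 ->]]; exists t; do 2 split => //=; congr pair; ring.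
Qed.

Section HVSegments.
Variables (T : finType) (s : T -> segment R).
Hypothesis hv : forall i, hv_segment (s i).

Definition vseg i := (s i).1.1 == (s i).2.1.
Definition hseg i := ~~ vseg i.
Definition seg_x i := (s i).1.1.
Definition seg_y i := (s i).1.2.
Definition seg_xmin i := Num.min (s i).1.1 (s i).2.1.
Definition seg_xmax i := Num.max (s i).1.1 (s i).2.1.
Definition seg_ymin i := Num.min (s i).1.2 (s i).2.2.
Definition seg_ymax i := Num.max (s i).1.2 (s i).2.2.

Definition hv_cross := cross hseg vseg seg_x seg_xmin seg_xmax seg_y seg_ymin seg_ymax.
(* [w] overlaps [u] on their common line when the left endpoint of [w] lies on [u]. *)
Definition hh_overlap := cross hseg hseg seg_xmin seg_xmin seg_xmax seg_y seg_y seg_y.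
Definition vv_overlap := cross vseg vseg seg_ymin seg_ymin seg_ymax seg_x seg_x seg_x.
Definition seg_meet u w := [|| hv_cross u w, hh_overlap u w | vv_overlap u w].

Lemma on_vseg i z : vseg i ->
  on_seg (s i) z <-> z.1 = seg_x i /\ seg_ymin i <= z.2 <= seg_ymax i.
Proof. by move=> /eqP; apply: on_vsegP. Qed.

Lemma on_hseg i z : hseg i ->
  on_seg (s i) z <-> z.2 = seg_y i /\ seg_xmin i <= z.1 <= seg_xmax i.
Proof.
move=> Hi; apply: on_hsegP; case: (hv i) => // e.
by move: Hi; rewrite /hseg /vseg e eqxx.
Qed.

Lemma seg_meet_intersect u w : seg_meet u w -> seg_intersect (s u) (s w).
Proof.
have le_min_max (a b : R) : Num.min a b <= Num.max a b by rewrite ge_min !le_max lexx.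
case/or3P => /and4P [Pu Pw uw wu].
- by exists (seg_x w, seg_y u); split; [apply/on_hseg | apply/on_vseg].
- have yuw : seg_y u = seg_y w by apply/le_anti; rewrite andbC.
  exists (seg_xmin w, seg_y u); split; first exact/on_hseg.
  by apply/on_hseg; rewrite //= lexx le_min_max.
- have xuw : seg_x u = seg_x w by apply/le_anti; rewrite andbC.
  exists (seg_x u, seg_ymin w); split; first exact/on_vseg.
  by apply/on_vseg; rewrite //= lexx le_min_max.
Qed.

Lemma intersect_seg_meet u w : seg_intersect (s u) (s w) -> seg_meet u w || seg_meet w u.
Proof.
case=> -[z1 z2] [zu zw].
have [Vu|Hu] := boolP (vseg u); have [Vw|Hw] := boolP (vseg w).
- move: zu zw => /(on_vseg _ Vu) [/= -> zu] /(on_vseg _ Vw) [/= xuw zw].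
  rewrite /seg_meet /vv_overlap.
  by case/orP: (cross_collinear (P := vseg) Vu Vw xuw zu zw) => ->; rewrite !orbT.
- move: zu zw => /(on_vseg _ Vu) [/= xu zu] /(on_hseg _ Hw) [/= yw zw].
  by rewrite /seg_meet /hv_cross /cross /hseg Hw Vu -xu -yw zu zw !orbT.
- move: zu zw => /(on_hseg _ Hu) [/= yu zu] /(on_vseg _ Vw) [/= xw zw].
  by rewrite /seg_meet /hv_cross /cross /hseg Hu Vw -xw -yu zu zw.
move: zu zw => /(on_hseg _ Hu) [/= -> zu] /(on_hseg _ Hw) [/= yuw zw].
rewrite /seg_meet /hh_overlap.
by case/orP: (cross_collinear (P := hseg) Hu Hw yuw zu zw) => ->; rewrite !orbT.
Qed.

Lemma seg_meet_hop3_cover :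
  exists E, hop3_cover seg_meet (fun _ => 21 * (up_log 2 #|T|).+1) E.
Proof.
have [E covE] := hop3_coverU
  (cross_hop3_cover hseg vseg seg_x seg_xmin seg_xmax seg_y seg_ymin seg_ymax)
  (hop3_coverU (cross_hop3_cover hseg hseg seg_xmin seg_xmin seg_xmax seg_y seg_y seg_y)
               (cross_hop3_cover vseg vseg seg_ymin seg_ymin seg_ymax seg_x seg_x seg_x)).
by exists E; apply: hop3_cover_le covE => a; lia.
Qed.

Lemma seg_intersectP u w : seg_intersect (s u) (s w) <-> seg_meet u w || seg_meet w u.
Proof.
split=> [|/orP [] /seg_meet_intersect //]; first exact: intersect_seg_meet.
by case=> z [zw zu]; exists z.
Qed.

End HVSegments.
End Segments.

Theorem lemma19 :
  exists C : nat, forall (R : realFieldType) (n : nat) (s : 'I_n -> segment R),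
    injective s -> (forall i, hv_segment (s i)) ->
    exists H : rel 'I_n,
      hop_spanner (ig_edge s) H 3 /\ (n_edges H <= C * n * up_log 2 n)%N.
Proof.
(* Out-degrees are at most 21 (L + 1) <= 42 L and every edge is counted at most twice. *)
exists 84 => R n s _ hv; have [E covE] := seg_meet_hop3_cover s.
exists (simple_graph E); split.
  apply: hop3_cover_spanner covE => u v; rewrite /ig_edge seg_intersectP //.
  by split=> -[/eqP].
have [n1|n2] := leqP n 1; first by rewrite n_edges_le1.
have L1 : 0 < up_log 2 n by rewrite up_log_gt0 n2.
apply: leq_trans (n_edges_hop3_cover covE) _.
by rewrite sum_nat_const !card_ord; nia.
Qed.
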